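(* Let $n$ be a positive integer and let $C$ be a connected component of $\Gamma(\mathsf{hypo}_n)$, with highest weight vertex $h$ and lowest weight vertex $l$. Then there is an automorphism of $C$ as an unlabelled undirected graph that maps $h$ to $l$.
   Context: Words are over the alphabet $\{1,\dots,n\}$. Quasi-Kashiwara operators for $1\le i\le n-1$: if a word $u$ contains a (not necessarily consecutive) subsequence $(i+1)\,i$, then $e_i(u)$ and $f_i(u)$ are undefined; otherwise $e_i(u)$ replaces the leftmost $i+1$ of $u$ by $i$ (undefined if there is no $i+1$) and $f_i(u)$ replaces the rightmost $i$ by $i+1$ (undefined if there is no $i$). $\Gamma(\mathsf{hypo}_n)$ is the directed graph with vertex set all words over $\{1,\dots,n\}$ and an edge $u\to f_i(u)$ labelled $i$ whenever $f_i(u)$ is defined. A highest weight vertex is one on which no $e_i$ is defined, and a lowest weight vertex is one on which no $f_i$ is defined; each connected component of $\Gamma(\mathsf{hypo}_n)$ has exactly one of each. *)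

From mathcomp Require Import all_boot.
From Stdlib Require Import Relations.
Set Implicit Arguments. Unset Strict Implicit. Unset Printing Implicit Defensive.

Definition word_on (n : nat) (u : seq nat) : bool := all (fun a => (0 < a <= n)) u.

Fixpoint has_pair (a b : nat) (u : seq nat) : bool :=
  match u with
  | [::] => false
  | x :: u' => ((x == a) && (b \in u')) || has_pair a b u'
  end.

(* position of the rightmost occurrence of x in u (meaningful when x \in u) *)
Definition rindex (x : nat) (u : seq nat) : nat := (size u).-1 - index x (rev u).

Definition e_op (i : nat) (u : seq nat) : option (seq nat) :=
  if has_pair i.+1 i u then None
  else if i.+1 \in u then Some (set_nth 0 u (index i.+1 u) i) else None.

Definition f_op (i : nat) (u : seq nat) : option (seq nat) :=
  if has_pair i.+1 i u then None
  else if i \in u then Some (set_nth 0 u (rindex i u) i.+1) else None.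

Definition hypo_edge (n : nat) (u v : seq nat) : Prop :=
  word_on n u /\ exists i, 1 <= i <= n.-1 /\ f_op i u = Some v.

Definition hypo_adj (n : nat) (u v : seq nat) : Prop :=
  hypo_edge n u v \/ hypo_edge n v u.

Definition hypo_conn (n : nat) : relation (seq nat) :=
  clos_refl_trans (seq nat) (hypo_adj n).

Definition highest_weight (n : nat) (u : seq nat) : Prop :=
  word_on n u /\ forall i, 1 <= i <= n.-1 -> e_op i u = None.

Definition lowest_weight (n : nat) (u : seq nat) : Prop :=
  word_on n u /\ forall i, 1 <= i <= n.-1 -> f_op i u = None.

From mathcomp Require Import all_boot zify.
From Stdlib Require Import Relations.
Set Implicit Arguments. Unset Strict Implicit. Unset Printing Implicit Defensive.

(* An edge of the graph raises a single letter by one without changing the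
   standardization of the word, so a component lies inside a standardization
   class.  A word of a class with [m] letters is determined by its sorted letters
   [x_0 <= ... <= x_(m-1)], subject only to [x_(k+1) >= x_k + 1] at the descents
   [k] of the class and to [1 <= x_0], [x_(m-1) <= n]; equivalently by its
   slacks [x_0 - 1, x_(k+1) - x_k - [k descent], n - x_(m-1)], and an edge
   raising [x_k] moves one unit of slack from position [k+1] to position [k].
   Reversing the slack vector is thus an involution of the class reversing all
   edges, hence an automorphism of the undirected graph.  It sends the highest
   weight word [h], which has no incoming edge, to a word with no outgoing edge
   in the class of [h]; such a word dominates every word of its class letterwise,
   so it is the lowest weight word [l], and the flip maps the component of [h]
   onto itself. *)

Lemma has_pairP a b (s : seq nat) :
  reflect (exists q q', [/\ q < q' < size s, nth 0 s q = a & nth 0 s q' = b])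
          (has_pair a b s).
Proof.
elim: s => [|c s IHs] /=; first by apply: ReflectF => -[q [q' [? _ _]]]; lia.
apply: (iffP orP) => [[/andP [/eqP ->] bs | /IHs [q [q' [? ? ?]]]] | ].
- exists 0, (index b s).+1; split => //=; last exact: nth_index.
  by rewrite ltnS index_mem.
- by exists q.+1, q'.+1; split.
case=> -[|q] [] [|q'] [] /= lt_qq' nth_q nth_q' //.
- by left; rewrite nth_q eqxx -nth_q' mem_nth //; lia.
- by right; apply/IHs; exists q, q'; split => //; lia.
Qed.

Lemma rindex_max (x : nat) (s : seq nat) q : q < size s -> nth 0 s q = x -> q <= rindex x s.
Proof.
move=> lt_q_s nth_q; rewrite /rindex.
have lt_j : size s - q.+1 < size (rev s) by rewrite size_rev; lia.
have := index_nth 0 lt_j; rewrite nth_rev; last by rewrite size_rev in lt_j.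
rewrite (_ : size s - (size s - q.+1).+1 = q) ?nth_q; lia.
Qed.

Lemma rindexP (x : nat) (s : seq nat) :
  x \in s -> rindex x s < size s /\ nth 0 s (rindex x s) = x.
Proof.
rewrite -mem_rev /rindex => x_in.
have : nth 0 (rev s) (index x (rev s)) = x := nth_index 0 x_in.
have : index x (rev s) < size s by rewrite -size_rev index_mem.
move: (index x (rev s)) => j lt_j; rewrite nth_rev // => <-.
by split; [lia | congr nth; lia].
Qed.

Definition std_lt (u : seq nat) p q :=
  (nth 0 u p < nth 0 u q) || (nth 0 u p == nth 0 u q) && (p < q).

Definition same_std (u v : seq nat) :=
  size v = size u /\
  forall p q, p < size u -> q < size u -> std_lt u p q = std_lt v p q.

Lemma same_std_refl u : same_std u u.
Proof. by split. Qed.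

Lemma same_std_sym u v : same_std u v -> same_std v u.
Proof. by case=> eq_size lt_uv; split=> // p q; rewrite eq_size => *; rewrite lt_uv. Qed.

Lemma same_std_trans u v w : same_std u v -> same_std v w -> same_std u w.
Proof.
case=> eq_uv lt_uv [eq_vw lt_vw]; split=> [|p q *]; first by rewrite eq_vw.
by rewrite lt_uv // lt_vw ?eq_uv.
Qed.

Lemma incr_nthE u p :
  p < size u -> incr_nth u p = set_nth 0 u p (nth 0 u p).+1.
Proof.
move=> lt_p; apply: (@eq_from_nth _ 0) => [|q _].
  by rewrite size_incr_nth size_set_nth lt_p; lia.
by rewrite nth_incr_nth nth_set_nth /= eq_sym; case: eqP => [->|].
Qed.

Lemma same_std_incr_nthP u p : p < size u ->
  same_std u (incr_nth u p) <->
  forall q, q < size u ->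
    (nth 0 u q = nth 0 u p -> q <= p) /\ (nth 0 u q = (nth 0 u p).+1 -> p < q).
Proof.
move=> lt_p; split=> [[_ lt_eq] q lt_q | incr_ok].
  have := lt_eq q p lt_q lt_p; rewrite /std_lt !nth_incr_nth eqxx.
  by case: (p =P q) => [->|/eqP ne_pq]; rewrite ?(negbTE ne_pq); lia.
split=> [|q q' lt_q lt_q']; first by rewrite size_incr_nth lt_p.
have := incr_ok q lt_q; have := incr_ok q' lt_q'.
by rewrite /std_lt !nth_incr_nth; case: (p =P q) => [<-|]; case: (p =P q') => [<-|]; lia.
Qed.

Lemma f_opP i u v :
  f_op i u = Some v <->
  exists2 p, p < size u &
    [/\ nth 0 u p = i, same_std u (incr_nth u p) & v = incr_nth u p].
Proof.
rewrite /f_op; split.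
  case: ifP => // /negbT /has_pairP no_pair; case: ifP => // /rindexP [lt_r nth_r] [<-].
  exists (rindex i u) => //; split=> //; last by rewrite incr_nthE // nth_r.
  apply/(same_std_incr_nthP lt_r) => q lt_q; rewrite nth_r; split; first exact: rindex_max.
  move=> nth_q; rewrite ltnNge leq_eqVlt; apply/negP => /orP [/eqP eq_qr | lt_qr].
    by move: nth_q; rewrite eq_qr nth_r; lia.
  by apply: no_pair; exists q, (rindex i u); rewrite lt_qr lt_r.
case=> p lt_p [nth_p /(same_std_incr_nthP lt_p) incr_ok ->].
have -> : has_pair i.+1 i u = false.
  apply/negbTE/has_pairP => -[q [q' [lt_qq' nth_q nth_q']]].
  have := incr_ok q; have := incr_ok q'; rewrite nth_p; lia.
have i_in : i \in u by rewrite -nth_p mem_nth.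
have [lt_r nth_r] := rindexP i_in.
have -> : rindex i u = p.
  by apply/eqP; rewrite eqn_leq rindex_max // andbT; apply: (incr_ok _ lt_r).1; rewrite nth_r.
by rewrite i_in (incr_nthE lt_p) nth_p.
Qed.

Lemma e_op_f_op i u v : f_op i u = Some v -> e_op i v = Some u.
Proof.
case/f_opP=> p lt_p [nth_p /(same_std_incr_nthP lt_p) incr_ok ->].
have size_v : size (incr_nth u p) = size u by rewrite size_incr_nth lt_p.
have nth_v q : nth 0 (incr_nth u p) q = (p == q) + nth 0 u q by rewrite nth_incr_nth.
rewrite /e_op; have -> : has_pair i.+1 i (incr_nth u p) = false.
  apply/negbTE/has_pairP => -[q [q' []]]; rewrite size_v !nth_v.
  have := incr_ok q; have := incr_ok q'; rewrite nth_p.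
  by case: (p =P q) => [<-|]; case: (p =P q') => [<-|]; lia.
have v_p : nth 0 (incr_nth u p) p = i.+1 by rewrite nth_v eqxx nth_p.
have i1_in : i.+1 \in incr_nth u p by rewrite -v_p mem_nth ?size_v.
have -> : index i.+1 (incr_nth u p) = p.
  apply/eqP; rewrite eqn_leq -{1}v_p index_nth ?size_v //=.
  have := nth_index 0 i1_in; rewrite nth_v.
  have : index i.+1 (incr_nth u p) < size u by rewrite -size_v index_mem.
  move: (index _ _) => j lt_j.
  by have := incr_ok j lt_j; rewrite nth_p; case: (p =P j) => [->|]; lia.
rewrite i1_in; congr Some; apply: (@eq_from_nth _ 0) => [|q _].
  by rewrite size_set_nth size_v; lia.
by rewrite nth_set_nth /= nth_v eq_sym; case: eqP => // <-; rewrite nth_p.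
Qed.

Lemma hypo_edgeP n u v :
  hypo_edge n u v <->
  word_on n u /\ exists2 p, p < size u &
    [/\ nth 0 u p < n, same_std u (incr_nth u p) & v = incr_nth u p].
Proof.
split=> [[u_on [i [/andP [i_ge1 i_lt] /f_opP [p lt_p [nth_p std_p ->]]]]] | [u_on [p lt_p]]].
  by split=> //; exists p => //; split=> //; lia.
case=> lt_n std_p ->; split=> //.
have /andP [nth_ge1 _] := all_nthP 0 u_on p lt_p.
by exists (nth 0 u p); split; [lia | apply/f_opP; exists p].
Qed.

Lemma word_on_incr_nth n u p :
  word_on n u -> p < size u -> nth 0 u p < n -> word_on n (incr_nth u p).
Proof.
move=> /all_nthP u_on lt_p lt_n; apply/(all_nthP 0) => q.
rewrite size_incr_nth lt_p nth_incr_nth => /(u_on 0)/andP.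
by case: (p =P q) => [<-|]; lia.
Qed.

Lemma sub_count_ltn (T : eqType) (a b : pred T) (s : seq T) x :
  subpred a b -> x \in s -> b x -> ~~ a x -> count a s < count b s.
Proof.
move=> sub_ab; elim: s => [//|y s IHs] /=; rewrite inE => /orP [/eqP <- | x_in] bx nax.
  by rewrite (negbTE nax) bx add0n add1n ltnS sub_count.
have := IHs x_in bx nax; case: (boolP (a y)) => [/sub_ab -> | _]; case: (b y); lia.
Qed.

Definition std_rank (u : seq nat) p := count (std_lt u ^~ p) (iota 0 (size u)).

Definition std_pos (u : seq nat) k := find (fun p => std_rank u p == k) (iota 0 (size u)).

Section StdRank.

Variable u : seq nat.

Lemma std_lt_irr p : std_lt u p p = false.
Proof. rewrite /std_lt; lia. Qed.

Lemma std_lt_trans p q r : std_lt u p q -> std_lt u q r -> std_lt u p r.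
Proof. rewrite /std_lt; lia. Qed.

Lemma std_lt_total p q : p != q -> std_lt u p q || std_lt u q p.
Proof. rewrite /std_lt; lia. Qed.

Lemma std_rank_lt p q : p < size u -> std_lt u p q -> std_rank u p < std_rank u q.
Proof.
move=> lt_p lt_pq; apply: (@sub_count_ltn _ _ _ _ p).
- by move=> r lt_rp; apply: std_lt_trans lt_pq.
- by rewrite mem_iota.
- exact: lt_pq.
- by rewrite /= std_lt_irr.
Qed.

Lemma std_rank_ltn p : p < size u -> std_rank u p < size u.
Proof.
move=> lt_p; rewrite -[ltnRHS](size_iota 0) -(count_predC (std_lt u ^~ p)) -addn1 leq_add2l.
by rewrite -has_count; apply/hasP; exists p; rewrite ?mem_iota //= std_lt_irr.
Qed.

Lemma ltn_std_rank p q :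
  p < size u -> q < size u -> (std_rank u p < std_rank u q) = std_lt u p q.
Proof.
move=> lt_p lt_q; apply/idP/idP; last exact: std_rank_lt.
case: (eqVneq p q) => [-> | /(std_lt_total) /orP [] // lt_qp]; first by rewrite ltnn.
by have := std_rank_lt lt_q lt_qp; lia.
Qed.

Lemma std_rank_inj p q :
  p < size u -> q < size u -> std_rank u p = std_rank u q -> p = q.
Proof.
move=> lt_p lt_q eq_pq; apply/eqP/negP => /negP/std_lt_total/orP.
by rewrite -!ltn_std_rank // eq_pq ltnn; case.
Qed.

Lemma std_rank_onto k : k < size u -> exists2 p, p < size u & std_rank u p = k.
Proof.
move=> lt_k; set ranks := map (std_rank u) (iota 0 (size u)).
have uniq_ranks : uniq ranks.
  rewrite map_inj_in_uniq ?iota_uniq // => p q; rewrite !mem_iota.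
  exact: std_rank_inj.
have sub_ranks : {subset ranks <= iota 0 (size u)}.
  by move=> r /mapP [p]; rewrite !mem_iota => lt_p ->; apply: std_rank_ltn.
have [_ eq_ranks] := uniq_min_size uniq_ranks sub_ranks (eq_leq (esym (size_map _ _))).
have : k \in ranks by rewrite eq_ranks mem_iota.
by case/mapP=> p; rewrite mem_iota => lt_p ->; exists p.
Qed.

Lemma has_std_rank k : k < size u -> has (fun p => std_rank u p == k) (iota 0 (size u)).
Proof. by case/std_rank_onto=> p lt_p rank_p; apply/hasP; exists p; rewrite ?mem_iota ?rank_p. Qed.

Lemma std_pos_ltn k : k < size u -> std_pos u k < size u.
Proof. by move/has_std_rank; rewrite has_find size_iota. Qed.

Lemma std_posK k : k < size u -> std_rank u (std_pos u k) = k.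
Proof.
move=> lt_k; have /eqP := nth_find 0 (has_std_rank lt_k).
by rewrite nth_iota ?add0n // std_pos_ltn.
Qed.

Lemma std_rankK p : p < size u -> std_pos u (std_rank u p) = p.
Proof.
move=> lt_p; have lt_rank := std_rank_ltn lt_p.
by apply: std_rank_inj; rewrite ?std_posK ?std_pos_ltn.
Qed.

End StdRank.

Definition std_descent (u : seq nat) k := std_pos u k.+1 < std_pos u k.

Definition descents (u : seq nat) a b := count (std_descent u) (iota a (b - a)).

Definition sorted_letter (u : seq nat) k := nth 0 u (std_pos u k).

Section Descents.

Variable u : seq nat.

Lemma descentsnn a : descents u a a = 0.
Proof. by rewrite /descents subnn. Qed.

Lemma descentsS k : descents u k k.+1 = std_descent u k.
Proof. by rewrite /descents subSnn /= addn0. Qed.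

Lemma descents_cat a b c : a <= b -> b <= c -> descents u a c = descents u a b + descents u b c.
Proof.
move=> le_ab le_bc; rewrite /descents (_ : c - a = (b - a) + (c - b)); last by lia.
by rewrite iotaD count_cat subnKC.
Qed.

Lemma sorted_letterS k :
  k.+1 < size u -> sorted_letter u k + std_descent u k <= sorted_letter u k.+1.
Proof.
move=> lt_k1; have lt_k : k < size u by lia.
have := ltn_std_rank (std_pos_ltn lt_k) (std_pos_ltn lt_k1).
by rewrite !std_posK // ltnSn /std_lt /sorted_letter /std_descent; lia.
Qed.

Lemma sorted_letter_mono k l :
  k <= l < size u -> sorted_letter u k + descents u k l <= sorted_letter u l.
Proof.
elim: l => [|l IHl] /andP [le_kl lt_l].
  by rewrite (_ : k = 0) ?descentsnn ?addn0 //; lia.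
case: (eqVneq k l.+1) => [-> | ne_kl]; first by rewrite descentsnn addn0.
rewrite (@descents_cat k l l.+1) ?descentsS //; last by lia.
by have := IHl (ltac:(lia)); have := sorted_letterS lt_l; lia.
Qed.

Lemma sorted_letter_bounds n k : word_on n u -> k < size u ->
  1 + descents u 0 k <= sorted_letter u k /\
  sorted_letter u k + descents u k (size u).-1 <= n.
Proof.
move=> /all_nthP u_on lt_k.
have := u_on 0 _ (@std_pos_ltn u 0 (ltac:(lia))).
have := u_on 0 _ (@std_pos_ltn u (size u).-1 (ltac:(lia))).
have := @sorted_letter_mono 0 k (ltac:(lia)).
have := @sorted_letter_mono k (size u).-1 (ltac:(lia)).
rewrite /sorted_letter; lia.
Qed.

Lemma same_std_by_rank w (y : nat -> nat) :
  size w = size u ->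
  (forall p, p < size u -> nth 0 w p = y (std_rank u p)) ->
  (forall k, k.+1 < size u -> y k + std_descent u k <= y k.+1) ->
  same_std u w.
Proof.
move=> size_w w_y y_step.
have y_mono k l : k < l < size u ->
    y k <= y l /\ (y k = y l -> std_pos u k < std_pos u l).
  elim: l => [|l IHl] /andP [lt_kl lt_l]; first by [].
  have := y_step l lt_l; rewrite /std_descent.
  have ne_pos : std_pos u l != std_pos u l.+1.
    by apply/eqP => /(congr1 (std_rank u)); rewrite !std_posK //; lia.
  case: (eqVneq k l) => [-> | ne_kl]; first by lia.
  by have := IHl (ltac:(lia)); lia.
split=> // p q lt_p lt_q; rewrite -ltn_std_rank // /std_lt !w_y //.
have lt_rp := std_rank_ltn lt_p; have lt_rq := std_rank_ltn lt_q.
have := std_rankK lt_p; have := std_rankK lt_q.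
case: (ltngtP (std_rank u p) (std_rank u q)) => [lt_pq | lt_qp | eq_pq].
- by have := y_mono _ _ (ltac:(lia) : std_rank u p < std_rank u q < size u); lia.
- by have := y_mono _ _ (ltac:(lia) : std_rank u q < std_rank u p < size u); lia.
- by rewrite (std_rank_inj lt_p lt_q eq_pq); lia.
Qed.

End Descents.

Section SameStd.

Variables u v : seq nat.
Hypothesis std_uv : same_std u v.

Lemma same_std_rank p : p < size u -> std_rank u p = std_rank v p.
Proof.
case: std_uv => size_v lt_uv lt_p; rewrite /std_rank size_v.
by apply: eq_in_count => q; rewrite mem_iota => lt_q; apply: lt_uv.
Qed.

Lemma same_std_pos k : std_pos u k = std_pos v k.
Proof.
rewrite /std_pos (proj1 std_uv); apply: eq_in_find => p.
by rewrite mem_iota add0n => /andP [_ lt_p]; rewrite same_std_rank.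
Qed.

Lemma same_std_descents a b : descents u a b = descents v a b.
Proof. by rewrite /descents; apply: eq_count => k; rewrite /std_descent !same_std_pos. Qed.

End SameStd.

Lemma sorted_letter_incr_nth u p k :
  p < size u -> same_std u (incr_nth u p) -> k < size u ->
  sorted_letter (incr_nth u p) k = sorted_letter u k + (k == std_rank u p).
Proof.
move=> lt_p std_v lt_k; rewrite /sorted_letter -(same_std_pos std_v) nth_incr_nth addnC.
by congr (_ + nat_of_bool _); apply/eqP/eqP => [-> | ->]; rewrite ?std_posK ?std_rankK.
Qed.

(* With [x], [x'] the sorted letters of [u], [flip n u] and [D(a, b)] the number
   of descents in [[a, b)]: [x'_k - 1 - D(0, k) = n - x_(m-1-k) - D(m-1-k, m-1)],
   i.e. the k-th prefix sum of the slacks of [x'] is the k-th suffix sum of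
   those of [x]. *)
Definition flip_letter n (u : seq nat) k :=
  let k' := (size u).-1 - k in
  n.+1 + descents u 0 k - (sorted_letter u k' + descents u k' (size u).-1).

Definition flip n (u : seq nat) := mkseq (fun p => flip_letter n u (std_rank u p)) (size u).

Lemma size_flip n u : size (flip n u) = size u.
Proof. exact: size_mkseq. Qed.

Lemma nth_flip n u p : p < size u -> nth 0 (flip n u) p = flip_letter n u (std_rank u p).
Proof. exact: nth_mkseq. Qed.

Section Flip.

Variables (n : nat) (u : seq nat).
Hypothesis u_on : word_on n u.

Lemma flip_letter_bounds k : k < size u -> 0 < flip_letter n u k <= n.
Proof.
move=> lt_k; rewrite /flip_letter.
have := sorted_letter_bounds u_on (ltac:(lia) : (size u).-1 - k < size u).
have := @descents_cat u 0 k (size u).-1 (ltac:(lia)) (ltac:(lia)).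
have := @descents_cat u 0 ((size u).-1 - k) (size u).-1 (ltac:(lia)) (ltac:(lia)).
lia.
Qed.

Lemma flip_letterS k :
  k.+1 < size u -> flip_letter n u k + std_descent u k <= flip_letter n u k.+1.
Proof.
move=> lt_k1; rewrite /flip_letter; set m := (size u).-1.
have eq_k' : m - k = (m - k.+1).+1 by lia.
have := sorted_letter_bounds u_on (ltac:(lia) : m - k < size u).
have := sorted_letter_bounds u_on (ltac:(lia) : m - k.+1 < size u).
have := @sorted_letterS u (m - k.+1) (ltac:(lia)).
have := @descents_cat u (m - k.+1) (m - k) m (ltac:(lia)) (ltac:(lia)).
have := @descents_cat u 0 k k.+1 (ltac:(lia)) (ltac:(lia)).
rewrite !descentsS eq_k' descentsS -eq_k' -/m; lia.
Qed.

Lemma same_std_flip : same_std u (flip n u).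
Proof.
apply: (same_std_by_rank (y := flip_letter n u)); first exact: size_flip.
- exact: nth_flip.
- exact: flip_letterS.
Qed.

Lemma word_on_flip : word_on n (flip n u).
Proof.
apply/(all_nthP 0) => p; rewrite size_flip => lt_p.
by rewrite nth_flip // flip_letter_bounds // std_rank_ltn.
Qed.

Lemma sorted_letter_flip k : k < size u -> sorted_letter (flip n u) k = flip_letter n u k.
Proof.
move=> lt_k; rewrite /sorted_letter -(same_std_pos same_std_flip).
by rewrite nth_flip ?std_pos_ltn // std_posK.
Qed.

Lemma flipK : flip n (flip n u) = u.
Proof.
have std_flip := same_std_flip.
apply: (@eq_from_nth _ 0) => [|p]; rewrite !size_flip // => lt_p.
rewrite nth_flip ?size_flip // -(same_std_rank std_flip) //.
have lt_k := std_rank_ltn lt_p; move: (std_rank u p) lt_k (std_rankK lt_p) => k lt_k <-.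
rewrite {1}/flip_letter size_flip -!(same_std_descents std_flip) sorted_letter_flip; last by lia.
rewrite /flip_letter (_ : (size u).-1 - ((size u).-1 - k) = k); last by lia.
have := sorted_letter_bounds u_on lt_k.
have := sorted_letter_bounds u_on (ltac:(lia) : (size u).-1 - k < size u).
have := @descents_cat u 0 k (size u).-1 (ltac:(lia)) (ltac:(lia)).
have := @descents_cat u 0 ((size u).-1 - k) (size u).-1 (ltac:(lia)) (ltac:(lia)).
rewrite /sorted_letter; lia.
Qed.

Lemma flip_incr_nth p :
  p < size u -> nth 0 u p < n -> same_std u (incr_nth u p) ->
  flip n u = incr_nth (flip n (incr_nth u p)) (std_pos u ((size u).-1 - std_rank u p)).
Proof.
move=> lt_p lt_n std_v; set v := incr_nth u p; set p' := std_pos u _.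
have v_on : word_on n v by apply: word_on_incr_nth.
have size_v : size v = size u by rewrite size_incr_nth lt_p.
have lt_rp := std_rank_ltn lt_p.
apply: (@eq_from_nth _ 0) => [|q].
  by rewrite size_incr_nth !size_flip size_v std_pos_ltn //; lia.
rewrite size_flip => lt_q; have lt_rq := std_rank_ltn lt_q.
rewrite nth_incr_nth nth_flip // nth_flip ?size_v // -(same_std_rank std_v) //.
have -> : (p' == q) = ((size u).-1 - std_rank u q == std_rank u p).
  apply/eqP/eqP => [<- | eq_rq]; first by rewrite /p' std_posK //; lia.
  by rewrite /p' -eq_rq (_ : _ - _ = std_rank u q) ?std_rankK //; lia.
have := sorted_letter_bounds v_on
  (ltac:(rewrite size_v; lia) : (size u).-1 - std_rank u q < size v).
rewrite /flip_letter size_v -!(same_std_descents std_v) sorted_letter_incr_nth //; last by lia.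
case: eqP => _ /=; lia.
Qed.

End Flip.

Lemma hypo_edge_flip n u v : hypo_edge n u v -> hypo_edge n (flip n v) (flip n u).
Proof.
case/hypo_edgeP=> u_on [p lt_p [lt_n std_v ->]].
have v_on : word_on n (incr_nth u p) by apply: word_on_incr_nth.
have flip_u := flip_incr_nth u_on lt_p lt_n std_v; set q := std_pos u _ in flip_u.
have lt_q : q < size (flip n (incr_nth u p)).
  by rewrite size_flip size_incr_nth lt_p std_pos_ltn //; have := std_rank_ltn lt_p; lia.
apply/hypo_edgeP; split; first exact: word_on_flip.
exists q; rewrite // -flip_u; split=> //.
  have /(all_nthP 0)/(_ q) := word_on_flip u_on.
  by rewrite flip_u nth_incr_nth eqxx size_incr_nth lt_q; lia.
apply: same_std_trans (same_std_sym (same_std_flip v_on)) _.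
exact: same_std_trans (same_std_sym std_v) (same_std_flip u_on).
Qed.

Lemma hypo_adj_sym n u v : hypo_adj n u v -> hypo_adj n v u.
Proof. by case=> edge; [right | left]. Qed.

Lemma hypo_adj_flip n u v : hypo_adj n u v -> hypo_adj n (flip n u) (flip n v).
Proof. by case=> /hypo_edge_flip; [right | left]. Qed.

Lemma hypo_adj_same_std n u v :
  word_on n u -> hypo_adj n u v -> word_on n v /\ same_std u v.
Proof.
move=> u_on [] /hypo_edgeP [src_on [p lt_p [lt_n std_p eq_incr]]].
  by rewrite eq_incr; split=> //; apply: word_on_incr_nth.
by rewrite eq_incr in u_on *; split=> //; apply: same_std_sym.
Qed.

Lemma hypo_conn_same_std n u v :
  hypo_conn n u v -> word_on n u -> word_on n v /\ same_std u v.
Proof.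
elim=> {u v} [u v adj_uv u_on | u u_on | u v w _ IHuv _ IHvw u_on].
- exact: hypo_adj_same_std.
- by split=> //; apply: same_std_refl.
- have [v_on std_uv] := IHuv u_on; have [w_on std_vw] := IHvw v_on.
  by split=> //; apply: same_std_trans std_vw.
Qed.

Lemma clos_refl_trans_sym T (R : relation T) :
  (forall x y, R x y -> R y x) -> forall x y, clos_refl_trans T R x y -> clos_refl_trans T R y x.
Proof.
move=> R_sym x y; elim=> {x y} [x y /R_sym | x | x y z _ IHxy _ IHyz].
- exact: rt_step.
- exact: rt_refl.
- exact: rt_trans IHyz IHxy.
Qed.

Lemma clos_refl_trans_hom T (R : relation T) (f : T -> T) :
  (forall x y, R x y -> R (f x) (f y)) ->
  forall x y, clos_refl_trans T R x y -> clos_refl_trans T R (f x) (f y).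
Proof.
move=> R_f x y; elim=> {x y} [x y /R_f | x | x y z _ IHxy _ IHyz].
- exact: rt_step.
- exact: rt_refl.
- exact: rt_trans IHxy IHyz.
Qed.

Lemma lowest_weight_no_edge n u v : lowest_weight n u -> ~ hypo_edge n u v.
Proof. by case=> _ no_f [_ [i [/no_f ->]]]. Qed.

Lemma highest_weight_no_in_edge n u v : highest_weight n v -> ~ hypo_edge n u v.
Proof. by case=> _ no_e [_ [i [/no_e e_v /e_op_f_op]]]; rewrite e_v. Qed.

Lemma lowest_weight_flip n h : highest_weight n h -> lowest_weight n (flip n h).
Proof.
move=> h_high; have h_on := proj1 h_high; split=> [|i range_i]; first exact: word_on_flip.
case f_flip: (f_op i (flip n h)) => [v|] //; exfalso.
have /hypo_edge_flip : hypo_edge n (flip n h) v by split; [exact: word_on_flip | exists i].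
by rewrite flipK //; apply: highest_weight_no_in_edge.
Qed.

(* If [v] exceeded [u] somewhere, raising [u] at the last such place in the
   standardization order would be an edge out of [u]. *)
Lemma lowest_weight_max n u v p :
  lowest_weight n u -> word_on n v -> same_std u v -> p < size u ->
  nth 0 v p <= nth 0 u p.
Proof.
move=> u_low v_on std_uv lt_p; rewrite leqNgt; apply/negP => lt_uv.
pose above k := (k < size u) && (nth 0 u (std_pos u k) < nth 0 v (std_pos u k)).
have ex_above : exists k, above k by exists (std_rank u p); rewrite /above std_rank_ltn ?std_rankK.
have ub_above k : above k -> k <= size u by case/andP=> /ltnW.
case: (ex_maxnP ex_above ub_above) => k0 /andP [lt_k0 above_k0] max_k0.
set p0 := std_pos u k0 in above_k0; have lt_p0 : p0 < size u by apply: std_pos_ltn.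
have after_p0 q : q < size u -> std_lt u p0 q -> nth 0 v q <= nth 0 u q /\ std_lt v p0 q.
  move=> lt_q lt_p0q; rewrite -(proj2 std_uv) //; split=> //; rewrite leqNgt; apply/negP => gt_q.
  have := max_k0 (std_rank u q); rewrite /above std_rank_ltn ?std_rankK // gt_q.
  by have := std_rank_lt lt_p0 lt_p0q; rewrite std_posK //; lia.
have /andP [_ v_le_n] := all_nthP 0 v_on p0 (ltac:(rewrite (proj1 std_uv); exact: lt_p0)).
apply: (lowest_weight_no_edge u_low); apply/hypo_edgeP; split; first exact: (proj1 u_low).
exists p0 => //; split=> //; first by lia.
apply/(same_std_incr_nthP lt_p0) => q lt_q.
by have := after_p0 q lt_q; rewrite /std_lt; lia.
Qed.

Lemma lowest_weight_uniq n u v :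
  lowest_weight n u -> lowest_weight n v -> same_std u v -> u = v.
Proof.
move=> u_low v_low std_uv; apply: (@eq_from_nth _ 0) => [|p lt_p]; first by rewrite (proj1 std_uv).
apply/eqP; rewrite eqn_leq (lowest_weight_max u_low (proj1 v_low) std_uv) // andbT.
by apply: (lowest_weight_max v_low (proj1 u_low) (same_std_sym std_uv)); rewrite (proj1 std_uv).
Qed.

Theorem corollary4p8 (n : nat) (w h l : seq nat) :
  0 < n -> word_on n w ->
  hypo_conn n w h -> highest_weight n h ->
  hypo_conn n w l -> lowest_weight n l ->
  exists phi : seq nat -> seq nat,
    (forall u, hypo_conn n w u -> hypo_conn n w (phi u)) /\
    (forall u v, hypo_conn n w u -> hypo_conn n w v -> phi u = phi v -> u = v) /\
    (forall v, hypo_conn n w v -> exists2 u, hypo_conn n w u & phi u = v) /\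
    (forall u v, hypo_conn n w u -> hypo_conn n w v ->
       (hypo_adj n u v <-> hypo_adj n (phi u) (phi v))) /\
    phi h = l.
Proof.
move=> _ w_on conn_wh h_high conn_wl l_low.
have C_on u : hypo_conn n w u -> word_on n u by case/hypo_conn_same_std.
have [h_on std_wh] := hypo_conn_same_std conn_wh w_on.
have [_ std_wl] := hypo_conn_same_std conn_wl w_on.
have flip_h : flip n h = l.
  apply: lowest_weight_uniq (lowest_weight_flip h_high) l_low _.
  apply: same_std_trans (same_std_sym (same_std_flip h_on)) _.
  exact: same_std_trans (same_std_sym std_wh) std_wl.
have conn_flip := clos_refl_trans_hom (@hypo_adj_flip n).
have conn_sym := clos_refl_trans_sym (@hypo_adj_sym n).
have C_flip u : hypo_conn n w u -> hypo_conn n w (flip n u).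
  move=> conn_wu; apply: rt_trans conn_wl _; rewrite -flip_h.
  by apply: conn_flip; apply: rt_trans (conn_sym _ _ conn_wh) conn_wu.
exists (flip n); split; [exact: C_flip | split; [|split; [|split]]] => //.
- by move=> u v /C_on u_on /C_on v_on /(congr1 (flip n)); rewrite !flipK.
- by move=> v /[dup] /C_on v_on /C_flip; exists (flip n v); rewrite ?flipK.
- move=> u v /C_on u_on /C_on v_on; split; first exact: hypo_adj_flip.
  by move/hypo_adj_flip; rewrite !flipK.
Qed.
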